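(* Let $\alpha,\beta,\gamma$ be partitions with $\alpha_1\le 2$ such that $\beta'_i\le\gamma'_i+1$ for all $i\ge 1$ (i.e. $\beta\setminus\gamma$ is a vertical strip). Then in the poset $(\mathcal D_{\alpha,\gamma}^\beta,\le_{\rm arc})$ all saturated chains have the same length.
   Context: For a partition $\lambda$, $\lambda'$ denotes the conjugate partition. Let $\alpha_1\le 2$, so $\alpha'=(\alpha'_1,\alpha'_2)$. Place the positive integers on a horizontal line in decreasing order from left to right. An arc is a pair $(m,n)$ of positive integers with $m>n$ (source $m$, target $n$), drawn as an upper semicircle joining $m$ and $n$; a pole at $n$ is a vertical half-line starting at $n$, regarded as an arc $(\infty,n)$ with source $\infty$ (larger than every integer). An arc diagram of type $(\alpha,\beta,\gamma)$ is a finite multiset of $\alpha'_2$ arcs and $\alpha'_1-\alpha'_2$ poles such that for each $i\ge1$ the number of arcs and poles having $i$ as source or target equals $\beta'_i-\gamma'_i$. $\mathcal D_{\alpha,\gamma}^\beta$ is the set of these. Two members $(m,n),(k,r)$ (arcs or poles) cross iff $r<n<k<m$ or $n<r<m<k$; $x(\Delta)$ is the number of crossing pairs of members of $\Delta$ (counted with multiplicity). Moves: for $a>b>c>d$, (A) replaces arcs $(a,c),(b,d)$ by $(a,d),(b,c)$; (C) replaces arcs $(a,c),(b,d)$ by $(a,b),(c,d)$; for $a>b>c$, (B) replaces arc $(a,c)$ and pole $(\infty,b)$ by arc $(a,b)$ and pole $(\infty,c)$; (D) replaces arc $(a,c)$ and pole $(\infty,b)$ by arc $(b,c)$ and pole $(\infty,a)$;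 all other members stay unchanged. $\Delta\le_{\rm arc}\Delta'$ iff $\Delta$ is obtained from $\Delta'$ by a finite (possibly empty) sequence of such moves. A chain in a poset is saturated if it has no refinement, i.e. it is not properly contained in any other chain of the poset. *)

From Stdlib Require Import Relations.
From mathcomp Require Import all_boot.
From mathcomp Require Import finmap multiset.

Set Implicit Arguments.
Unset Strict Implicit.
Unset Printing Implicit Defensive.

Definition is_partition (l : seq nat) : Prop :=
  sorted geq l /\ all (fun x => 0 < x) l.

Definition conj (l : seq nat) (i : nat) : nat := count (fun x => i <= x) l.

(* A member of an arc diagram: (source, target); source None stands for oo,
   i.e. (None, n) is the pole at n, (Some m, n) is the arc (m, n). *)
Definition member := (option nat * nat)%type.

Definition is_arc (e : member) : bool :=
  if e.1 is Some m then (0 < e.2) && (e.2 < m) else false.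
Definition is_pole (e : member) : bool :=
  if e.1 is None then 0 < e.2 else false.

Definition touches (i : nat) (e : member) : bool :=
  (e.1 == Some i) || (e.2 == i).

Definition diagram := multiset member.

(* membership in D^beta_{alpha,gamma}; multiplicities are counted via the
   coercion of a multiset to the sequence of its elements with repetition *)
Definition in_D (al be ga : seq nat) (D : diagram) : Prop :=
  all (fun e => is_arc e || is_pole e) (enum_mset D) /\
  count is_arc (enum_mset D) = conj al 2 /\
  count is_pole (enum_mset D) = conj al 1 - conj al 2 /\
  (forall i, 0 < i -> count (touches i) (enum_mset D) + conj ga i = conj be i).

Definition madd2 (R : diagram) (x y : member) : diagram :=
  msetD R (msetD (msetn 1 x) (msetn 1 y)).

Definition one_move (D' D : diagram) : Prop :=
  exists (R : diagram) (a b c d : nat),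
    [\/ [/\ 0 < d < c, c < b < a,
            D' = madd2 R (Some a, c) (Some b, d) &
            D = madd2 R (Some a, d) (Some b, c)],
        [/\ 0 < c < b, b < a,
            D' = madd2 R (Some a, c) (None, b) &
            D = madd2 R (Some a, b) (None, c)],
        [/\ 0 < d < c, c < b < a,
            D' = madd2 R (Some a, c) (Some b, d) &
            D = madd2 R (Some a, b) (Some c, d)] |
        [/\ 0 < c < b, b < a,
            D' = madd2 R (Some a, c) (None, b) &
            D = madd2 R (Some b, c) (None, a)]].

Definition le_arc (D D' : diagram) : Prop :=
  clos_refl_trans diagram one_move D' D.

(* A chain of the poset (D^beta_{alpha,gamma}, <=_arc), listed without
   repetition as a sequence (every chain is finite since the poset is). *)
Definition is_chain (al be ga : seq nat) (s : seq diagram) : Prop :=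
  uniq s /\ (forall D, D \in s -> in_D al be ga D) /\
  (forall D E, D \in s -> E \in s -> le_arc D E \/ le_arc E D).

Definition saturated_chain (al be ga : seq nat) (s : seq diagram) : Prop :=
  is_chain al be ga s /\
  (forall t, is_chain al be ga t -> {subset s <= t} -> {subset t <= s}).

(* The crossing number x is a rank function on the poset.  Since beta / gamma
   is a vertical strip, no integer is an endpoint of two members of a diagram.
   A move uncrosses its pair and crosses no third member more often, so it
   lowers x; if it lowers x by two or more, a third member lies in its way and
   the move factors into three moves around it.  A diagram with x > 0 admits a
   move down, and a diagram with k arcs, p poles and fewer than C(k,2) + k p
   crossings, the maximum, is the result of a move.  So a saturated chain can
   skip no value of x and runs from x = 0 to x = C(k,2) + k p. *)

From Stdlib Require Import Relations.
From mathcomp Require Import all_boot.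
From mathcomp Require Import finmap multiset.
From mathcomp Require Import zify.

Set Implicit Arguments.
Unset Strict Implicit.
Unset Printing Implicit Defensive.

Lemma clos_rt_eq_or_t (A : Type) (R : relation A) x y :
  clos_refl_trans A R x y -> x = y \/ clos_trans A R x y.
Proof.
move=> xy; elim: (clos_rt_rt1n _ _ _ _ xy) => [|a b c ab _ [<-|bc]]; first by left.
  by right; apply: t_step.
by right; apply: t_trans (t_step _ _ _ _ ab) bc.
Qed.

Lemma clos_trans_first_step (A : Type) (R : relation A) x y : clos_trans A R x y ->
  exists z, R x z /\ (z = y \/ clos_trans A R z y).
Proof.
move=> xy; case: (clos_trans_t1n _ _ _ _ xy) => [z xz|z y' xz zy].
  by exists z; split => //; left.
by exists z; split => //; right; apply: clos_t1n_trans.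
Qed.

Lemma has_argmax (T : eqType) (f : T -> nat) (s : seq T) : s != [::] ->
  exists2 x, x \in s & forall y, y \in s -> f y <= f x.
Proof.
elim: s => [|a s IH] // _; case: (eqVneq s [::]) => [->|/IH [x xs x_max]].
  by exists a; rewrite ?mem_head // => y; rewrite inE => /eqP->.
have [le_ax|lt_xa] := leqP (f a) (f x).
  by exists x => [|y]; rewrite ?inE ?xs ?orbT // => /orP[/eqP->|/x_max].
by exists a => [|y]; rewrite ?mem_head // inE => /orP[/eqP->//|/x_max]; lia.
Qed.

Lemma sub_in_count (T : eqType) (a1 a2 : pred T) (s : seq T) :
  {in s, subpred a1 a2} -> count a1 s <= count a2 s.
Proof.
elim: s => [|x s IH] //= sub.
apply: leq_add; last by apply: IH => y ys; apply: sub; rewrite inE ys orbT.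
by case a1x: (a1 x); rewrite // (sub x (mem_head _ _) a1x).
Qed.

Definition cross (e f : member) : bool :=
  match e.1, f.1 with
  | Some m, Some k =>
      [&& f.2 < e.2, e.2 < k & k < m] || [&& e.2 < f.2, f.2 < m & m < k]
  | Some m, None => e.2 < f.2 < m
  | None, Some k => f.2 < e.2 < k
  | None, None => false
  end.

Lemma crossC e f : cross e f = cross f e.
Proof. by case: e => [[m|] n]; case: f => [[k|] r] //; rewrite /cross /= orbC. Qed.

Lemma cross_irr e : cross e e = false.
Proof. by case: e => [[m|] n]; rewrite /cross //=; apply/negbTE; lia. Qed.

Fixpoint crossings (l : seq member) : nat :=
  if l is e :: l' then count (cross e) l' + crossings l' else 0.

Lemma crossings_double l : 2 * crossings l = \sum_(e <- l) count (cross e) l.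
Proof.
elim: l => [|e l IH]; first by rewrite big_nil.
rewrite big_cons /= cross_irr add0n.
rewrite (eq_bigr (fun f => cross f e + count (cross f) l)) // big_split /=.
have -> : \sum_(f <- l) cross f e = count (cross e) l.
  rewrite -sum1_count [RHS]big_mkcond /=.
  by apply: eq_bigr => f _; rewrite crossC; case: (cross e f).
lia.
Qed.

Lemma perm_crossings l l' : perm_eq l l' -> crossings l = crossings l'.
Proof.
move=> pl; apply/eqP; rewrite -(eqn_pmul2l (isT : 0 < 2)) !crossings_double.
rewrite (perm_big _ pl) /=; apply/eqP/eq_bigr => e _; exact: (permP pl).
Qed.

Definition crossing_number (D : diagram) : nat := crossings (enum_mset D).

Lemma perm_enum_madd2 (R : diagram) x y :
  perm_eq (enum_mset (madd2 R x y)) (x :: y :: enum_mset R).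
Proof.
apply/allP => z _ /=; rewrite count_mem_mset /madd2 !msetE2 !msetnE count_mem_mset.
by apply/eqP; rewrite !(eq_sym _ z); case: (z == x); case: (z == y) => /=; lia.
Qed.

Lemma crossing_number_madd2 R x y :
  crossing_number (madd2 R x y) =
  cross x y + (count (cross x) (enum_mset R) + count (cross y) (enum_mset R))
  + crossings (enum_mset R).
Proof. rewrite /crossing_number (perm_crossings (perm_enum_madd2 R x y)) /=; lia. Qed.

Ltac decide_nat_cmp :=
  repeat match goal with
  | |- context [leq ?x ?y] =>
      first [ rewrite (_ : leq x y = true); [|by apply/idP; lia]
            | rewrite (_ : leq x y = false); [|by apply/negbTE/negP; lia] ]
  | |- context [?x == ?y] =>
      lazymatch type of x with nat => idtac end;
      first [ rewrite (_ : (x == y) = true); [|by apply/eqP; lia]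
            | rewrite (_ : (x == y) = false); [|by apply/negbTE/eqP; lia] ]
  end.

Ltac case_between z d c b a :=
  have [?|[?|[?|[?|?]]]] :
    z < d \/ d < z < c \/ c < z < b \/ b < z < a \/ a < z by lia.

Ltac case_between3 z c b a :=
  have [?|[?|[?|?]]] : z < c \/ c < z < b \/ b < z < a \/ a < z by lia.

Lemma eqSome (a b : nat) : (Some a == Some b) = (a == b).
Proof. by []. Qed.

Definition avoids (x y e : member) : Prop :=
  (is_arc e || is_pole e) /\
  forall i, touches i e -> ~~ touches i x && ~~ touches i y.

Lemma avoids_arc (x y : member) m n : avoids x y (Some m, n) ->
  [/\ 0 < n, n < m, ~~ touches n x && ~~ touches n y
    & ~~ touches m x && ~~ touches m y].
Proof.
move=> [/orP[/andP[n_gt0 n_lt_m]|//] H]; split => //; apply: H.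
  by rewrite /touches eqxx orbT.
by rewrite /touches eqxx.
Qed.

Lemma avoids_pole (x y : member) n : avoids x y (None, n) ->
  0 < n /\ ~~ touches n x && ~~ touches n y.
Proof.
by move=> [/orP[//|n_gt0] H]; split => //; apply: H; rewrite /touches eqxx orbT.
Qed.

Lemma cross_moveA a b c d e : 0 < d < c -> c < b < a ->
  avoids (Some a, c) (Some b, d) e ->
  cross (Some a, d) e + cross (Some b, c) e <= cross (Some a, c) e + cross (Some b, d) e /\
  (cross (Some a, d) e + cross (Some b, c) e < cross (Some a, c) e + cross (Some b, d) e ->
   exists m n, e = (Some m, n) /\ d < n < c /\ b < m < a).
Proof.
move=> h1 h2; case: e => [[m|] n] /= H.
  case/avoids_arc: H => h3 h4; rewrite /touches /= !eqSome => h5 h6; rewrite /cross /=.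
  case_between n d c b a; case_between m d c b a; decide_nat_cmp;
    split=> // _; by exists m, n; split => //; lia.
case/avoids_pole: H => h3; rewrite /touches /= !eqSome => h5; rewrite /cross /=.
by case_between n d c b a; decide_nat_cmp.
Qed.

Lemma cross_moveB a b c e : 0 < c < b -> b < a ->
  avoids (Some a, c) (None, b) e ->
  cross (Some a, b) e + cross (None, c) e <= cross (Some a, c) e + cross (None, b) e /\
  (cross (Some a, b) e + cross (None, c) e < cross (Some a, c) e + cross (None, b) e ->
   (exists m n, e = (Some m, n) /\ c < n < b /\ a < m) \/
   (exists n, e = (None, n) /\ c < n < b)).
Proof.
move=> h1 h2; case: e => [[m|] n] /= H.
  case/avoids_arc: H => h3 h4; rewrite /touches /= !eqSome => h5 h6; rewrite /cross /=.
  case_between3 n c b a; case_between3 m c b a; decide_nat_cmp;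
    split=> // _; left; by exists m, n; split => //; lia.
case/avoids_pole: H => h3; rewrite /touches /= !eqSome => h5; rewrite /cross /=.
case_between3 n c b a; decide_nat_cmp; split=> // _; right; by exists n; split => //; lia.
Qed.

Lemma cross_moveC a b c d e : 0 < d < c -> c < b < a ->
  avoids (Some a, c) (Some b, d) e ->
  cross (Some a, b) e + cross (Some c, d) e <= cross (Some a, c) e + cross (Some b, d) e /\
  (cross (Some a, b) e + cross (Some c, d) e < cross (Some a, c) e + cross (Some b, d) e ->
   (exists m n, e = (Some m, n) /\ (n < d /\ c < m < b \/ c < n < b /\ a < m)) \/
   (exists n, e = (None, n) /\ c < n < b)).
Proof.
move=> h1 h2; case: e => [[m|] n] /= H.
  case/avoids_arc: H => h3 h4; rewrite /touches /= !eqSome => h5 h6; rewrite /cross /=.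
  case_between n d c b a; case_between m d c b a; decide_nat_cmp;
    split=> // _; left; by exists m, n; split => //; lia.
case/avoids_pole: H => h3; rewrite /touches /= !eqSome => h5; rewrite /cross /=.
case_between n d c b a; decide_nat_cmp; split=> // _; right; by exists n; split => //; lia.
Qed.

Lemma cross_moveD a b c e : 0 < c < b -> b < a ->
  avoids (Some a, c) (None, b) e ->
  cross (Some b, c) e + cross (None, a) e <= cross (Some a, c) e + cross (None, b) e /\
  (cross (Some b, c) e + cross (None, a) e < cross (Some a, c) e + cross (None, b) e ->
   (exists m n, e = (Some m, n) /\ n < c /\ b < m < a) \/
   (exists n, e = (None, n) /\ b < n < a)).
Proof.
move=> h1 h2; case: e => [[m|] n] /= H.
  case/avoids_arc: H => h3 h4; rewrite /touches /= !eqSome => h5 h6; rewrite /cross /=.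
  case_between3 n c b a; case_between3 m c b a; decide_nat_cmp;
    split=> // _; left; by exists m, n; split => //; lia.
case/avoids_pole: H => h3; rewrite /touches /= !eqSome => h5; rewrite /cross /=.
case_between3 n c b a; decide_nat_cmp; split=> // _; right; by exists n; split => //; lia.
Qed.

(* The vertical strip condition makes the members of a diagram endpoint-disjoint. *)
Definition wf_members (l : seq member) : Prop :=
  all (fun e => is_arc e || is_pole e) l /\
  forall i, 0 < i -> count (touches i) l <= 1.

Lemma perm_wf_members l l' : perm_eq l l' -> wf_members l -> wf_members l'.
Proof.
move=> pl [l_mem l_touch]; split.
  by apply/allP => e; rewrite -(perm_mem pl); move/allP: l_mem; apply.
by move=> i i_gt0; rewrite -(permP pl); apply: l_touch.
Qed.

Lemma touches_gt0 e i : is_arc e || is_pole e -> touches i e -> 0 < i.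
Proof.
case: e => [[m|] n]; rewrite /is_arc /is_pole /touches /= ?eqSome //.
  by case/andP => n_gt0 n_lt_m /orP[/eqP<-|/eqP<-]; lia.
by move=> n_gt0 /eqP<-.
Qed.

Lemma wf_members_avoids x y l e :
  wf_members (x :: y :: l) -> e \in l -> avoids x y e.
Proof.
move=> [l_mem l_touch] el.
have e_mem : is_arc e || is_pole e by move/allP: l_mem; apply; rewrite !inE el !orbT.
split => // i te; have := l_touch i (touches_gt0 e_mem te); rewrite /=.
have : 0 < count (touches i) l by rewrite -has_count; apply/hasP; exists e.
by case: (touches i x); case: (touches i y) => /=; lia.
Qed.

Lemma leq_count2 (p q p' q' : pred member) l :
  (forall e, e \in l -> p' e + q' e <= p e + q e) ->
  count p' l + count q' l <= count p l + count q l /\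
  (count p' l + count q' l < count p l + count q l ->
     exists2 e, e \in l & p' e + q' e < p e + q e).
Proof.
elim: l => [|e l IH] H //=.
have [IH1 IH2] := IH (fun f fl => H f (mem_behead (s := e :: l) fl)).
have He := H e (mem_head _ _).
split=> [|lt_count]; first lia.
case: (ltnP (p' e + q' e) (p e + q e)) => [lt_e|ge_e]; first by exists e; rewrite ?mem_head.
have [f fl lt_f] := IH2 ltac:(lia).
by exists f; rewrite // inE fl orbT.
Qed.

Lemma crossing_number_swap R x y x' y' :
  cross x y -> ~~ cross x' y' ->
  wf_members (x :: y :: enum_mset R) ->
  (forall e, avoids x y e -> cross x' e + cross y' e <= cross x e + cross y e) ->
  crossing_number (madd2 R x' y') < crossing_number (madd2 R x y) /\
  (crossing_number (madd2 R x' y') + 1 < crossing_number (madd2 R x y) ->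
     exists2 e, e \in enum_mset R &
       avoids x y e /\ cross x' e + cross y' e < cross x e + cross y e).
Proof.
move=> cxy ncxy wf le_cross.
have [le_count lt_count] := leq_count2 (p := cross x) (q := cross y)
  (p' := cross x') (q' := cross y') (fun e eR => le_cross e (wf_members_avoids wf eR)).
rewrite !crossing_number_madd2 cxy (negbTE ncxy) /=.
move: le_count lt_count; set nx' := count _ _; set ny' := count _ _.
set nx := count _ _; set ny := count _ _ => le_count lt_count.
split=> [|lt2]; first lia.
have [e eR lt_e] := lt_count ltac:(lia).
by exists e => //; split => //; apply: wf_members_avoids wf eR.
Qed.

Inductive pair_move : member -> member -> member -> member -> Prop :=
  | MoveA a b c d of 0 < d < c & c < b < a :
      pair_move (Some a, c) (Some b, d) (Some a, d) (Some b, c)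
  | MoveB a b c of 0 < c < b & b < a :
      pair_move (Some a, c) (None, b) (Some a, b) (None, c)
  | MoveC a b c d of 0 < d < c & c < b < a :
      pair_move (Some a, c) (Some b, d) (Some a, b) (Some c, d)
  | MoveD a b c of 0 < c < b & b < a :
      pair_move (Some a, c) (None, b) (Some b, c) (None, a).

Lemma pair_move_one_move R x y x' y' :
  pair_move x y x' y' -> one_move (madd2 R x y) (madd2 R x' y').
Proof.
case=> [a b c d|a b c|a b c d|a b c] h1 h2.
- by exists R, a, b, c, d; apply: Or41.
- by exists R, a, b, c, 0; apply: Or42.
- by exists R, a, b, c, d; apply: Or43.
- by exists R, a, b, c, 0; apply: Or44.
Qed.

Lemma one_move_pair D' D : one_move D' D ->
  exists R x y x' y', [/\ pair_move x y x' y', D' = madd2 R x y & D = madd2 R x' y'].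
Proof.
case=> R [a [b [c [d [] [h1 h2 -> ->]]]]]; exists R; do 4 eexists; split; try reflexivity.
- exact: MoveA h1 h2.
- exact: MoveB h1 h2.
- exact: MoveC h1 h2.
- exact: MoveD h1 h2.
Qed.

Lemma pair_move_cross x y x' y' : pair_move x y x' y' -> cross x y && ~~ cross x' y'.
Proof. by case=> [a b c d|a b c|a b c d|a b c] h1 h2; rewrite /cross /=; decide_nat_cmp. Qed.

Lemma madd2C (R : diagram) x y : madd2 R x y = madd2 R y x.
Proof. by apply/msetP => z; rewrite /madd2 !msetE2; lia. Qed.

Definition madd3 (R : diagram) (x y z : member) : diagram := madd2 (msetD R (msetn 1 z)) x y.

Lemma madd3E R x y z w : madd3 R x y z w = R w + (w == x) + (w == y) + (w == z).
Proof.
rewrite /madd3 /madd2 !msetE2 !msetnE.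
by case: (w == x); case: (w == y); case: (w == z) => /=; lia.
Qed.

Lemma one_move_madd3 R x y z x' y' z' u v w u' v' :
  pair_move u v u' v' ->
  madd3 R x y z = madd3 R u v w -> madd3 R x' y' z' = madd3 R u' v' w ->
  one_move (madd3 R x y z) (madd3 R x' y' z').
Proof. by move=> uv -> ->; apply: pair_move_one_move. Qed.

Tactic Notation "move3" uconstr(u) uconstr(v) uconstr(w) constr(move) :=
  refine (@one_move_madd3 _ _ _ _ _ _ _ u v w _ _ _ _ _);
    [apply: move; lia | apply/msetP => ?; rewrite !madd3E; lia ..].

Definition move_factors (D' D : diagram) : Prop :=
  exists E, one_move D' E /\ clos_trans diagram one_move E D.

(* Each of the following reroutes a move around a third member [(m, n)] or
   [(oo, n)] which it crosses differently, using three moves. *)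
Lemma move_factorsA R a b c d m n : 0 < d -> d < n -> n < c -> c < b -> b < m -> m < a ->
  move_factors (madd3 R (Some a, c) (Some b, d) (Some m, n))
               (madd3 R (Some a, d) (Some b, c) (Some m, n)).
Proof.
move=> *; exists (madd3 R (Some a, n) (Some m, c) (Some b, d)); split.
  by move3 (Some a, c) (Some m, n) (Some b, d) MoveA.
apply: (t_trans _ _ _ (madd3 R (Some m, d) (Some b, c) (Some a, n))); apply: t_step.
  by move3 (Some m, c) (Some b, d) (Some a, n) MoveA.
by move3 (Some a, n) (Some m, d) (Some b, c) MoveA.
Qed.

Lemma move_factorsC1 R a b c d m n : 0 < n -> n < d -> d < c -> c < m -> m < b -> b < a ->
  move_factors (madd3 R (Some a, c) (Some b, d) (Some m, n))
               (madd3 R (Some a, b) (Some c, d) (Some m, n)).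
Proof.
move=> *; exists (madd3 R (Some b, n) (Some m, d) (Some a, c)); split.
  by move3 (Some b, d) (Some m, n) (Some a, c) MoveA.
apply: (t_trans _ _ _ (madd3 R (Some a, b) (Some c, n) (Some m, d))); apply: t_step.
  by move3 (Some a, c) (Some b, n) (Some m, d) MoveC.
by move3 (Some m, d) (Some c, n) (Some a, b) MoveA.
Qed.

Lemma move_factorsC2 R a b c d m n : 0 < d -> d < c -> c < n -> n < b -> b < a -> a < m ->
  move_factors (madd3 R (Some a, c) (Some b, d) (Some m, n))
               (madd3 R (Some a, b) (Some c, d) (Some m, n)).
Proof.
move=> *; exists (madd3 R (Some m, c) (Some a, n) (Some b, d)); split.
  by move3 (Some m, n) (Some a, c) (Some b, d) MoveA.
apply: (t_trans _ _ _ (madd3 R (Some m, b) (Some c, d) (Some a, n))); apply: t_step.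
  by move3 (Some m, c) (Some b, d) (Some a, n) MoveC.
by move3 (Some m, b) (Some a, n) (Some c, d) MoveA.
Qed.

Lemma move_factorsC3 R a b c d n : 0 < d -> d < c -> c < n -> n < b -> b < a ->
  move_factors (madd3 R (Some a, c) (Some b, d) (None, n))
               (madd3 R (Some a, b) (Some c, d) (None, n)).
Proof.
move=> *; exists (madd3 R (Some a, n) (None, c) (Some b, d)); split.
  by move3 (Some a, c) (None, n) (Some b, d) MoveB.
apply: (t_trans _ _ _ (madd3 R (Some a, b) (Some n, d) (None, c))); apply: t_step.
  by move3 (Some a, n) (Some b, d) (None, c) MoveC.
by move3 (Some n, d) (None, c) (Some a, b) MoveD.
Qed.

Lemma move_factorsB1 R a b c m n : 0 < c -> c < n -> n < b -> b < a -> a < m ->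
  move_factors (madd3 R (Some a, c) (None, b) (Some m, n))
               (madd3 R (Some a, b) (None, c) (Some m, n)).
Proof.
move=> *; exists (madd3 R (Some m, c) (Some a, n) (None, b)); split.
  by move3 (Some m, n) (Some a, c) (None, b) MoveA.
apply: (t_trans _ _ _ (madd3 R (Some m, b) (None, c) (Some a, n))); apply: t_step.
  by move3 (Some m, c) (None, b) (Some a, n) MoveB.
by move3 (Some m, b) (Some a, n) (None, c) MoveA.
Qed.

Lemma move_factorsB2 R a b c n : 0 < c -> c < n -> n < b -> b < a ->
  move_factors (madd3 R (Some a, c) (None, b) (None, n))
               (madd3 R (Some a, b) (None, c) (None, n)).
Proof.
move=> *; exists (madd3 R (Some a, n) (None, c) (None, b)); split.
  by move3 (Some a, c) (None, n) (None, b) MoveB.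
by apply: t_step; move3 (Some a, n) (None, b) (None, c) MoveB.
Qed.

Lemma move_factorsD1 R a b c m n : 0 < n -> n < c -> c < b -> b < m -> m < a ->
  move_factors (madd3 R (Some a, c) (None, b) (Some m, n))
               (madd3 R (Some b, c) (None, a) (Some m, n)).
Proof.
move=> *; exists (madd3 R (Some a, n) (Some m, c) (None, b)); split.
  by move3 (Some a, c) (Some m, n) (None, b) MoveA.
apply: (t_trans _ _ _ (madd3 R (Some b, c) (None, m) (Some a, n))); apply: t_step.
  by move3 (Some m, c) (None, b) (Some a, n) MoveD.
by move3 (Some a, n) (None, m) (Some b, c) MoveD.
Qed.

Lemma move_factorsD2 R a b c n : 0 < c -> c < b -> b < n -> n < a ->
  move_factors (madd3 R (Some a, c) (None, b) (None, n))
               (madd3 R (Some b, c) (None, a) (None, n)).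
Proof.
move=> *; exists (madd3 R (Some n, c) (None, a) (None, b)); split.
  by move3 (Some a, c) (None, n) (None, b) MoveD.
by apply: t_step; move3 (Some n, c) (None, b) (None, a) MoveD.
Qed.

Lemma mset_split (R : diagram) e :
  e \in enum_mset R -> exists R0, R = msetD R0 (msetn 1 e).
Proof. by move=> eR; exists (msetB R (msetn 1 e)); rewrite msetDC msetB1K. Qed.

Lemma one_move_crossing D' D : wf_members (enum_mset D') -> one_move D' D ->
  crossing_number D < crossing_number D' /\
  (crossing_number D + 1 < crossing_number D' -> move_factors D' D).
Proof.
move=> wf /one_move_pair [R [x [y [x' [y' [pm eD' eD]]]]]]; subst D' D.
have {wf} wf := perm_wf_members (perm_enum_madd2 R _ _) wf.
have /andP [cxy ncxy'] := pair_move_cross pm.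
case: pm cxy ncxy' wf => [a b c d|a b c|a b c d|a b c] h1 h2 cxy ncxy' wf.
- have [lt1 lt2] := crossing_number_swap cxy ncxy' wf (fun e ae => proj1 (cross_moveA h1 h2 ae)).
  split => // /lt2 [e eR [ae lt_e]]; have [R0 ->] := mset_split eR.
  clear lt1 lt2 wf eR cxy ncxy'.
  have [_ /(_ lt_e) [m [n [E [hn hm]]]]] := cross_moveA h1 h2 ae.
  by subst e; apply: move_factorsA; lia.
- have [lt1 lt2] := crossing_number_swap cxy ncxy' wf (fun e ae => proj1 (cross_moveB h1 h2 ae)).
  split => // /lt2 [e eR [ae lt_e]]; have [R0 ->] := mset_split eR.
  clear lt1 lt2 wf eR cxy ncxy'.
  have [_ /(_ lt_e) [[m [n [E [hn hm]]]]|[n [E hn]]]] := cross_moveB h1 h2 ae; subst e.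
    by apply: move_factorsB1; lia.
  by apply: move_factorsB2; lia.
- have [lt1 lt2] := crossing_number_swap cxy ncxy' wf (fun e ae => proj1 (cross_moveC h1 h2 ae)).
  split => // /lt2 [e eR [ae lt_e]]; have [R0 ->] := mset_split eR.
  clear lt1 lt2 wf eR cxy ncxy'.
  have [_ /(_ lt_e) [[m [n [E [[hn hm]|[hn hm]]]]]|[n [E hn]]]] := cross_moveC h1 h2 ae;
    subst e.
  + by case/avoids_arc: ae => n_gt0 _ _ _; apply: move_factorsC1; lia.
  + by apply: move_factorsC2; lia.
  by apply: move_factorsC3; lia.
- have [lt1 lt2] := crossing_number_swap cxy ncxy' wf (fun e ae => proj1 (cross_moveD h1 h2 ae)).
  split => // /lt2 [e eR [ae lt_e]]; have [R0 ->] := mset_split eR.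
  clear lt1 lt2 wf eR cxy ncxy'.
  have [_ /(_ lt_e) [[m [n [E [hn hm]]]]|[n [E hn]]]] := cross_moveD h1 h2 ae; subst e.
    by case/avoids_arc: ae => n_gt0 _ _ _; apply: move_factorsD1; lia.
  by apply: move_factorsD2; lia.
Qed.


(* The two pairs contribute equally to the counts constraining [in_D]. *)
Definition same_profile (x y x' y' : member) : Prop :=
  [/\ is_arc x + is_arc y = is_arc x' + is_arc y',
      is_pole x + is_pole y = is_pole x' + is_pole y' &
      forall i, touches i x + touches i y = touches i x' + touches i y'].

Lemma same_profile_sym x y x' y' : same_profile x y x' y' -> same_profile x' y' x y.
Proof. by case=> ea ep et; split=> // i; rewrite et. Qed.

Lemma touches_arc i m n : n < m -> touches i (Some m, n) = (m == i) + (n == i) :> nat.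
Proof.
move=> n_lt_m; rewrite /touches /= eqSome.
by case: (m =P i) => [mi|_]; case: (n =P i) => [ni|_] //=; lia.
Qed.

Lemma pair_move_same_profile x y x' y' : pair_move x y x' y' -> same_profile x y x' y'.
Proof.
case=> [a b c d|a b c|a b c d|a b c] h1 h2;
  split=> [||i]; rewrite /is_arc /is_pole /=; decide_nat_cmp; rewrite // ?touches_arc;
  try rewrite /touches /=; lia.
Qed.

Lemma arc_or_pole e : (is_arc e || is_pole e) = (is_arc e + is_pole e == 1).
Proof. by case: e => [[m|] n]; rewrite /is_arc /is_pole /=; [case: (_ && _)|case: (0 < n)]. Qed.

Lemma arc_pole_le1 e : is_arc e + is_pole e <= 1.
Proof. by case: e => [[m|] n]; rewrite /is_arc /is_pole /=; [case: (_ && _)|case: (0 < n)]. Qed.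

Lemma in_D_madd2_swap al be ga R x y x' y' : same_profile x y x' y' ->
  in_D al be ga (madd2 R x y) -> in_D al be ga (madd2 R x' y').
Proof.
have p := perm_enum_madd2 R x y; have p' := perm_enum_madd2 R x' y'.
move=> [ea ep et]; rewrite /in_D (perm_all _ p) (perm_all _ p') !(permP p) !(permP p') /=.
move=> [/and3P[vx vy vR] [n_arc [n_pole n_touch]]]; split; last split; last split.
- move: vx vy; rewrite !arc_or_pole vR andbT => /eqP vx /eqP vy.
  have := arc_pole_le1 x'; have := arc_pole_le1 y'; clear -vx vy ea ep => le_y' le_x'.
  by apply/andP; split; apply/eqP; lia.
- by rewrite addnA -ea -addnA.
- by rewrite addnA -ep -addnA.
- move=> i i_gt0; rewrite (permP p') -(n_touch i i_gt0) (permP p) /=.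
  by rewrite !addnA et.
Qed.

Lemma one_move_in_D al be ga D' D : one_move D' D ->
  in_D al be ga D' <-> in_D al be ga D.
Proof.
case/one_move_pair => R [x [y [x' [y' [/pair_move_same_profile sp -> ->]]]]].
by split; apply: in_D_madd2_swap => //; apply: same_profile_sym.
Qed.

Lemma in_D_wf_members al be ga D :
  (forall i, 0 < i -> conj be i <= conj ga i + 1) ->
  in_D al be ga D -> wf_members (enum_mset D).
Proof.
move=> strip [D_mem [_ [_ D_touch]]]; split => // i i_gt0.
by have := D_touch i i_gt0; have := strip i i_gt0; lia.
Qed.

Lemma perm_rot3 (e f g : member) l : perm_eq (e :: f :: g :: l) (f :: g :: e :: l).
Proof. by apply/permP => p /=; lia. Qed.

Lemma mset_perm_madd2 (D : diagram) e f l :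
  perm_eq (enum_mset D) (e :: f :: l) -> D = madd2 (seq_mset l) e f.
Proof.
move=> pl; apply/msetP => z.
rewrite -count_mem_mset (permP pl) /madd2 !msetE2 !msetnE mset_seqE /=.
by rewrite !(eq_sym _ z); case: (z == e); case: (z == f) => /=; lia.
Qed.

Lemma wf_members_perm2 D e f l : wf_members (enum_mset D) ->
  perm_eq (enum_mset D) (e :: f :: l) ->
  (is_arc e || is_pole e) /\ (is_arc f || is_pole f).
Proof.
by case=> /allP D_mem _ pl; split; apply: D_mem; rewrite (perm_mem pl) !inE eqxx ?orbT.
Qed.

Lemma crossings_gt0 l : 0 < crossings l ->
  exists e f l', perm_eq l (e :: f :: l') /\ cross e f.
Proof.
elim: l => [|e l IH] //=; case: (posnP (count (cross e) l)) => [c0|c_gt0] x_gt0.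
  have [e' [f' [l' [pl c]]]] := IH ltac:(lia).
  exists e', f', (e :: l'); split => //.
  by apply: perm_trans (perm_rot3 _ _ _ _); rewrite perm_cons.
have /hasP [f fl cf] : has (cross e) l by rewrite has_count.
by exists e, f, (rem f l); split => //; rewrite perm_cons; apply: perm_to_rem.
Qed.

Lemma move_down D : wf_members (enum_mset D) -> 0 < crossing_number D ->
  exists E, one_move D E.
Proof.
move=> wf /crossings_gt0 [e [f [l [pl c]]]].
have [ve vf] := wf_members_perm2 wf pl.
rewrite (mset_perm_madd2 pl); clear pl wf.
move: c ve vf; case: e => [[m|] n]; case: f => [[k|] r];
  rewrite /cross /is_arc /is_pole /= => c ve vf //.
- case/orP: c => c; last rewrite madd2C;
    by eexists; apply: pair_move_one_move; apply: MoveA; lia.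
- by eexists; apply: pair_move_one_move; apply: MoveB; lia.
- by rewrite madd2C; eexists; apply: pair_move_one_move; apply: MoveB; lia.
Qed.

(* [k] arcs and [p] poles: all pairs of arcs and all arc-pole pairs cross. *)
Definition max_crossings (k p : nat) : nat := 'C(k, 2) + k * p.


Lemma size_arcs_poles l : all (fun e => is_arc e || is_pole e) l ->
  size l = count is_arc l + count is_pole l.
Proof.
elim: l => [|e l IH] //= /andP[ve l_mem]; rewrite IH //.
by move: ve; rewrite arc_or_pole => /eqP; lia.
Qed.

Lemma cross_pole e f : is_pole e -> is_arc f || is_pole f -> cross e f -> is_arc f.
Proof. by case: e => [[m|] n]; case: f => [[k|] r]; rewrite /cross /is_arc /is_pole //= orbF. Qed.

Lemma arc_not_pole e : is_arc e -> is_pole e = false.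
Proof. by case: e => [[m|] n]. Qed.

Lemma crossings_le_max l : all (fun e => is_arc e || is_pole e) l ->
  crossings l <= max_crossings (count is_arc l) (count is_pole l) /\
  (crossings l < max_crossings (count is_arc l) (count is_pole l) ->
   exists e f l', perm_eq l (e :: f :: l') /\ ~~ cross e f /\ is_arc e).
Proof.
rewrite /max_crossings; elim: l => [|e l IH] //= /andP[ve l_mem].
have [IH1 IH2] := IH l_mem; have size_l := size_arcs_poles l_mem.
set k := count is_arc l in IH1 IH2 size_l *; set p := count is_pole l in IH1 IH2 size_l *.
have lift_IH : crossings l < 'C(k, 2) + k * p ->
    exists e' f l', perm_eq (e :: l) (e' :: f :: l') /\ ~~ cross e' f /\ is_arc e'.
  move=> /IH2 [e' [f' [l' [pl c]]]]; exists e', f', (e :: l'); split => //.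
  by apply: perm_trans (perm_rot3 _ _ _ _); rewrite perm_cons.
have [e_arc|e_not_arc] := boolP (is_arc e).
  rewrite (arc_not_pole e_arc).
  rewrite /= add0n binS bin1.
  have c_le : count (cross e) l <= size l by apply: count_size.
  split=> [|lt_max]; first lia.
  have [c_lt|c_ge] := ltnP (count (cross e) l) (size l); last by apply: lift_IH; lia.
  have /hasP [f fl cf] : has (predC (cross e)) l.
    by rewrite has_count; move: (count_predC (cross e) l); lia.
  exists e, f, (rem f l); split; last by split.
  by rewrite perm_cons; apply: perm_to_rem.
have e_pole : is_pole e by move: ve; rewrite (negbTE e_not_arc).
rewrite e_pole /= add0n.
have c_le : count (cross e) l <= k.
  by apply: sub_in_count => f fl; apply: cross_pole e_pole _; move/allP: l_mem; apply.
split=> [|lt_max]; first lia.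
have [c_lt|c_ge] := ltnP (count (cross e) l) k; last by apply: lift_IH; lia.
have : 0 < count (fun f => is_arc f && ~~ cross e f) l.
  have : k <= count (cross e) l + count (fun f => is_arc f && ~~ cross e f) l.
    rewrite -count_predUI; apply: (leq_trans _ (leq_addr _ _)).
    by apply: sub_count => f /= ->; case: (cross e f).
  lia.
rewrite -has_count => /hasP [f fl /andP [f_arc cf]].
exists f, e, (rem f l); split; last by rewrite crossC.
apply: (@perm_trans _ (e :: f :: rem f l)); first by rewrite perm_cons perm_to_rem.
by apply/permP => q /=; lia.
Qed.

Lemma wf_members_touch2 e f l i : wf_members (e :: f :: l) -> 0 < i ->
  touches i e -> ~~ touches i f.
Proof.
by move=> [_ l_touch] i_gt0 te; apply/negP => tf; have := l_touch i i_gt0; rewrite /= te tf.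
Qed.

Lemma move_up D : wf_members (enum_mset D) ->
  crossing_number D < max_crossings (count is_arc (enum_mset D)) (count is_pole (enum_mset D)) ->
  exists D', one_move D' D.
Proof.
move=> wf lt_max; have [_ /(_ lt_max) [e [f [l [pl [c e_arc]]]]]] := crossings_le_max (proj1 wf).
have [_ vf] := wf_members_perm2 wf pl.
move: (fun i => @wf_members_touch2 e f l i (perm_wf_members pl wf)) c e_arc vf.
rewrite (mset_perm_madd2 pl); clear pl wf lt_max.
case: e => [[m|] n] //; case: f => [[k|] r];
  rewrite /cross /is_arc /is_pole /= => sep c e_arc vf //.
- have := sep m ltac:(lia) ltac:(by rewrite /touches eqxx).
  have := sep n ltac:(lia) ltac:(by rewrite /touches eqxx orbT).
  rewrite /touches /= !eqSome => sep_n sep_m.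
  have [?|[?|[?|?]]] : k < m /\ n < r \/ k < m /\ k < n \/ m < k /\ r < n \/ m < k /\ m < r.
    by move: sep_n sep_m c e_arc vf; lia.
  + by eexists; apply: pair_move_one_move; apply: MoveA; lia.
  + by eexists; apply: pair_move_one_move; apply: MoveC; lia.
  + by rewrite madd2C; eexists; apply: pair_move_one_move; apply: MoveA; lia.
  + by rewrite madd2C; eexists; apply: pair_move_one_move; apply: MoveC; lia.
- have := sep m ltac:(lia) ltac:(by rewrite /touches eqxx).
  have := sep n ltac:(lia) ltac:(by rewrite /touches eqxx orbT).
  rewrite /touches /= => sep_n sep_m.
  have [?|?] : m < r \/ r < n by move: sep_n sep_m c; lia.
  + by eexists; apply: pair_move_one_move; apply: MoveD; lia.
  + by eexists; apply: pair_move_one_move; apply: MoveB; lia.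
Qed.

Definition top_rank (al : seq nat) : nat := max_crossings (conj al 2) (conj al 1 - conj al 2).

Lemma crossing_number_le_top al be ga D : in_D al be ga D -> crossing_number D <= top_rank al.
Proof.
by move=> [D_mem [n_arc [n_pole _]]]; have [+ _] := crossings_le_max D_mem; rewrite n_arc n_pole.
Qed.

Lemma saturated_mem al be ga s z : saturated_chain al be ga s -> in_D al be ga z ->
  (forall x, x \in s -> le_arc x z \/ le_arc z x) -> z \in s.
Proof.
move=> [[s_uniq [s_in s_cmp]] s_max] z_in z_cmp.
apply: contraT => z_notin; suff : z \in s by rewrite (negbTE z_notin).
apply: (s_max (z :: s)) (mem_head z s) => [|x xs]; last by rewrite inE xs orbT.
split; first by rewrite /= z_notin.
split=> [D|D E]; rewrite !inE; first by case/orP=> [/eqP->|/s_in].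
case/orP=> [/eqP->|Ds] /orP[/eqP->|Es].
- by left; apply: rt_refl.
- by case: (z_cmp E Es); [right|left].
- exact: z_cmp.
- exact: s_cmp.
Qed.

Lemma saturated_chain_nil al be ga s :
  saturated_chain al be ga [::] -> saturated_chain al be ga s -> s = [::].
Proof.
move=> nil_sat [[_ [s_in _]] _]; case: s s_in => [//|x s] s_in.
suff : x \in [::] by [].
by apply: saturated_mem nil_sat (s_in x (mem_head _ _)) _ => y; rewrite in_nil.
Qed.

Section SaturatedChains.

Variables al be ga : seq nat.
Hypothesis strip : forall i, 0 < i -> conj be i <= conj ga i + 1.

Lemma clos_trans_crossing E D : in_D al be ga E -> clos_trans diagram one_move E D ->
  in_D al be ga D /\ crossing_number D < crossing_number E.
Proof.
move=> E_in ED; elim: ED E_in => [x y xy|x y z _ IHxy _ IHyz] x_in.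
  split; first exact/(one_move_in_D al be ga xy).
  by case: (one_move_crossing (in_D_wf_members strip x_in) xy).
have [y_in lt_xy] := IHxy x_in; have [z_in lt_yz] := IHyz y_in; split => //; lia.
Qed.

Lemma le_arc_crossing D E : in_D al be ga E -> le_arc D E ->
  in_D al be ga D /\ (D = E \/ crossing_number D < crossing_number E).
Proof.
move=> E_in ED; case: (clos_rt_eq_or_t ED) => [<-|/(clos_trans_crossing E_in)].
  by split => //; left.
by case=> D_in lt_DE; split => //; right.
Qed.

Lemma chain_crossing_inj s x y : is_chain al be ga s -> x \in s -> y \in s ->
  crossing_number x = crossing_number y -> x = y.
Proof.
move=> [_ [s_in s_cmp]] xs ys eq_xy; case: (s_cmp x y xs ys) => [xy|yx].
  by have [_ [|]] := le_arc_crossing (s_in y ys) xy; [|lia].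
by have [_ [|]] := le_arc_crossing (s_in x xs) yx; [|lia].
Qed.

Lemma chain_le_arc s x y : is_chain al be ga s -> x \in s -> y \in s ->
  crossing_number x <= crossing_number y -> le_arc x y.
Proof.
move=> s_chain xs ys; rewrite leq_eqVlt => /orP[/eqP eq_xy|lt_xy].
  by rewrite (chain_crossing_inj s_chain xs ys eq_xy); apply: rt_refl.
have [_ [s_in s_cmp]] := s_chain; case: (s_cmp x y xs ys) => // yx.
by have [_ [xy|]] := le_arc_crossing (s_in x xs) yx; [subst; lia | lia].
Qed.

Lemma le_arc_factor x y : in_D al be ga y -> le_arc x y ->
  crossing_number x + 1 < crossing_number y ->
  exists E, one_move y E /\ clos_trans diagram one_move E x.
Proof.
move=> y_in yx gap; case: (clos_rt_eq_or_t yx) => [xy|]; first by subst; lia.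
move=> yx_t; have [E [yE [Ex|Ex]]] := clos_trans_first_step yx_t; last by exists E.
by subst E; case: (one_move_crossing (in_D_wf_members strip y_in) yE) => _; apply.
Qed.

Section Saturated.

Variable s : seq diagram.
Hypothesis s_sat : saturated_chain al be ga s.

Lemma saturated_above y z : y \in s -> in_D al be ga z -> le_arc y z ->
  (forall w, w \in s -> crossing_number w <= crossing_number y) -> z \in s.
Proof.
move=> ys z_in yz y_max; apply: (saturated_mem s_sat z_in) => w ws; left.
exact: rt_trans yz (chain_le_arc (proj1 s_sat) ws ys (y_max w ws)).
Qed.

Lemma saturated_below y z : y \in s -> in_D al be ga z -> le_arc z y ->
  (forall w, w \in s -> crossing_number w < crossing_number y -> le_arc w z) -> z \in s.
Proof.
move=> ys z_in zy below; apply: (saturated_mem s_sat z_in) => w ws.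
have [lt_wy|ge_wy] := ltnP (crossing_number w) (crossing_number y); first by left; apply: below.
by right; apply: rt_trans (chain_le_arc (proj1 s_sat) ys ws ge_wy) zy.
Qed.

Lemma saturated_top : s != [::] -> exists2 x, x \in s & crossing_number x = top_rank al.
Proof.
move=> s_neq0; have [x xs x_max] := has_argmax crossing_number s_neq0.
have x_in := proj1 (proj2 (proj1 s_sat)) x xs.
exists x => //; apply/eqP; rewrite eqn_leq (crossing_number_le_top x_in) /=.
apply/negP => /negP; rewrite -ltnNge => lt_top.
have [D' D'x] : exists D', one_move D' x.
  by apply: move_up; [apply: in_D_wf_members strip x_in | case: x_in => _ [-> [-> _]]].
have D'_in : in_D al be ga D' := proj2 (one_move_in_D al be ga D'x) x_in.
have [lt_xD' _] := one_move_crossing (in_D_wf_members strip D'_in) D'x.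
have := x_max D' (saturated_above xs D'_in (rt_step _ _ _ _ D'x) x_max); lia.
Qed.

(* Otherwise some move from [y] could be inserted into [s] just below [y]. *)
Lemma saturated_pred y : y \in s -> 0 < crossing_number y ->
  exists2 z, z \in s & crossing_number z + 1 = crossing_number y.
Proof.
move=> ys y_gt0; have y_in := proj1 (proj2 (proj1 s_sat)) y ys.
set P := fun z => crossing_number z + 1 == crossing_number y.
have [/hasP [z zs /eqP]|no_pred] := boolP (has P s); first by exists z.
exfalso.
suff [E [yE E_above E_max]] : exists E, [/\ one_move y E,
    forall w, w \in s -> crossing_number w < crossing_number y -> le_arc w E &
    forall w, w \in s -> crossing_number w < crossing_number y ->
      crossing_number w < crossing_number E].
  have E_in : in_D al be ga E := proj1 (one_move_in_D al be ga yE) y_in.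
  have [lt_Ey _] := one_move_crossing (in_D_wf_members strip y_in) yE.
  have := E_max E (saturated_below ys E_in (rt_step _ _ _ _ yE) E_above) lt_Ey; lia.
set L := [seq w <- s | crossing_number w < crossing_number y].
have inL w : w \in s -> crossing_number w < crossing_number y -> w \in L.
  by move=> ws lt_wy; rewrite mem_filter lt_wy ws.
have [L0|/(has_argmax crossing_number) [x]] := eqVneq L [::].
  have [E yE] := move_down (in_D_wf_members strip y_in) y_gt0.
  by exists E; split => // w ws /(inL w ws); rewrite L0.
rewrite mem_filter => /andP [lt_xy xs] x_max.
have gap : crossing_number x + 1 < crossing_number y.
  by have := hasPn no_pred x xs; rewrite /P => /eqP; lia.
have [E [yE Ex]] := le_arc_factor y_in (chain_le_arc (proj1 s_sat) xs ys (ltnW lt_xy)) gap.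
have [_ lt_xE] := clos_trans_crossing (proj1 (one_move_in_D al be ga yE) y_in) Ex.
exists E; split => // w ws /(inL w ws) /x_max le_wx; last lia.
exact: rt_trans (clos_t_clos_rt _ _ _ _ Ex) (chain_le_arc (proj1 s_sat) ws xs le_wx).
Qed.

Lemma saturated_ranks : s != [::] ->
  forall j, j <= top_rank al -> exists2 x, x \in s & crossing_number x = j.
Proof.
move=> s_neq0; have [t ts t_top] := saturated_top s_neq0.
suff down k : k <= top_rank al -> exists2 x, x \in s & crossing_number x = top_rank al - k.
  move=> j le_j; have [x xs x_rank] := down (top_rank al - j) (leq_subr _ _).
  by exists x => //; lia.
elim: k => [|k IH] le_k; first by exists t => //; lia.
have [x xs x_rank] := IH (ltnW le_k).
by have [z zs z_rank] := saturated_pred xs ltac:(lia); exists z => //; lia.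
Qed.

Lemma size_saturated_chain : s != [::] -> size s = (top_rank al).+1.
Proof.
move=> s_neq0; have s_chain := proj1 s_sat; have [s_uniq [s_in _]] := s_chain.
have ranks_uniq : uniq (map crossing_number s).
  by rewrite map_inj_in_uniq // => x y xs ys; apply: chain_crossing_inj s_chain xs ys.
have ranks : perm_eq (map crossing_number s) (iota 0 (top_rank al).+1).
  apply: uniq_perm ranks_uniq (iota_uniq _ _) _ => j; rewrite mem_iota add0n.
  apply/mapP/idP => [[x xs ->]|le_j]; first by have := crossing_number_le_top (s_in x xs); lia.
  by have [x xs <-] := saturated_ranks s_neq0 (j := j) ltac:(lia); exists x.
by rewrite -(size_map crossing_number) (perm_size ranks) size_iota.
Qed.

End Saturated.

End SaturatedChains.

Theorem mainTheorem1 (al be ga : seq nat) :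
  is_partition al -> is_partition be -> is_partition ga ->
  all (fun x => x <= 2) al ->
  (forall i, 0 < i -> conj be i <= conj ga i + 1) ->
  forall s t : seq diagram,
    saturated_chain al be ga s -> saturated_chain al be ga t ->
    (size s).-1 = (size t).-1.
Proof.
(* The numbers of arcs and poles are already fixed by [in_D]. *)
move=> _ _ _ _ strip s t s_sat t_sat.
have [s_nil|s_neq0] := eqVneq s [::].
  by subst s; rewrite (saturated_chain_nil s_sat t_sat).
have [t_nil|t_neq0] := eqVneq t [::].
  by subst t; move: s_neq0; rewrite (saturated_chain_nil t_sat s_sat).
by rewrite (size_saturated_chain strip s_sat s_neq0) (size_saturated_chain strip t_sat t_neq0).
Qed.
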